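(* In the setting described in the context, for the iterates of Method 2 one has $\operatorname{zer}(A+B)\subseteq T_k\cap\Gamma_k$ for all $k\in\mathbb N$.
   Context: Let $\mathcal H$ be a real Hilbert space with inner product $\langle\cdot,\cdot\rangle$ and norm $\|\cdot\|$. Let $A_1:\mathcal H\to\mathcal H$ be $\beta$-cocoercive for some $\beta>0$ (i.e. $\langle A_1x-A_1y,x-y\rangle\ge\beta\|A_1x-A_1y\|^2$ for all $x,y$), let $A_2:\mathcal H\to\mathcal H$ be maximally monotone and uniformly continuous, let $B:\mathcal H\rightrightarrows\mathcal H$ be maximally monotone, and set $A:=A_1+A_2$. Assume $\operatorname{zer}(A+B):=\{x:0\in Ax+Bx\}\neq\emptyset$. $J_{\alpha B}:=(I+\alpha B)^{-1}$ for $\alpha>0$, and $P_C$ denotes the orthogonal projection onto a nonempty closed convex set $C$. Fix $\theta,\delta\in(0,1)$, $\bar\delta>0$ with $1-\delta-\bar\delta>0$, and $\alpha_{-1}>0$ with $\alpha_{-1}\le4\beta\bar\delta$. Conceptual Algorithm: pick $x^0\in\mathcal H$. Given $x^k$ and $\alpha_{k-1}$, for $j\in\mathbb N$ let $\bar x^k_j:=J_{\alpha_{k-1}\theta^jB}(x^k-\alpha_{k-1}\theta^jAx^k)$ and let $j(k)$ be the smallest $j\in\mathbb N$ with $\alpha_{k-1}\theta^j\langle A_2x^k-A_2\bar x^k_j,x^k-\bar x^k_j\rangle\le\delta\|x^k-\bar x^k_j\|^2$. Set $\alpha_k:=\alpha_{k-1}\theta^{j(k)}$, $\bar x^k:=J_{\alpha_kB}(x^k-\alpha_kAx^k)$,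 $r_k:=\frac{\bar\delta}{\alpha_k}\|x^k-\bar x^k\|^2$, $T_k:=\{x\in\mathcal H:\langle \frac{x^k-\bar x^k}{\alpha_k}-(A_2x^k-A_2\bar x^k),x-\bar x^k\rangle\le r_k\}$ and $\Gamma_k:=\{x\in\mathcal H:\langle x^0-x^k,x-x^k\rangle\le0\}$. Method 2 sets $x^{k+1}:=P_{T_k\cap\Gamma_k}(x^0)$ and stops if $x^{k+1}=x^k$. *)

From HB Require Import structures.
From mathcomp Require Import all_boot all_order all_algebra.
From mathcomp Require Import boolp classical_sets reals.
Set Implicit Arguments. Unset Strict Implicit. Unset Printing Implicit Defensive.
Import Order.TTheory GRing.Theory Num.Theory.
Local Open Scope ring_scope.
Local Open Scope classical_set_scope.

Record inner_product (R : realType) (V : lmodType R) := InnerProduct {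
  ip : V -> V -> R;
  ip_sym : forall x y, ip x y = ip y x;
  ip_addl : forall x y z, ip (x + y) z = ip x z + ip y z;
  ip_scalel : forall (a : R) x y, ip (a *: x) y = a * ip x y;
  ip_ge0 : forall x, 0 <= ip x x;
  ip_eq0 : forall x, ip x x = 0 -> x = 0 }.

Section Hilbert.
Variables (R : realType) (V : lmodType R) (H : inner_product V).

Definition hnorm (x : V) : R := Num.sqrt (ip H x x).

Definition hilbert_complete : Prop :=
  forall u : nat -> V,
    (forall e : R, 0 < e -> exists N, forall m n, (N <= m)%N -> (N <= n)%N ->
        hnorm (u m - u n) < e) ->
    exists l : V, forall e : R, 0 < e -> exists N, forall n, (N <= n)%N ->
        hnorm (u n - l) < e.

Definition cocoercive (beta : R) (T : V -> V) : Prop :=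
  forall x y, beta * hnorm (T x - T y) ^+ 2 <= ip H (T x - T y) (x - y).

(* set-valued operators are relations: B x u means u \in B x *)
Definition monotone_op (B : V -> V -> Prop) : Prop :=
  forall x y u v, B x u -> B y v -> 0 <= ip H (u - v) (x - y).

Definition maximally_monotone (B : V -> V -> Prop) : Prop :=
  monotone_op B /\
  forall x u, (forall y v, B y v -> 0 <= ip H (u - v) (x - y)) -> B x u.

Definition graph (T : V -> V) : V -> V -> Prop := fun x u => u = T x.

Definition uniformly_continuous (T : V -> V) : Prop :=
  forall e : R, 0 < e -> exists2 d : R, 0 < d &
    forall x y, hnorm (x - y) < d -> hnorm (T x - T y) < e.

Definition zer (A1 A2 : V -> V) (B : V -> V -> Prop) : set V :=
  [set x | B x (- (A1 x + A2 x))].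

(* resolvent J_{a B} z = (I + a B)^{-1} z : the point p with z - p \in a B p *)
Definition resolvent (B : V -> V -> Prop) (a : R) (z : V) : V :=
  xget 0 [set p | B p (a^-1 *: (z - p))].

Definition is_proj (C : set V) (x0 p : V) : Prop :=
  C p /\ forall y, C y -> hnorm (x0 - p) <= hnorm (x0 - y).

Section Method2.
Variables (A1 A2 : V -> V) (B : V -> V -> Prop)
          (theta delta deltabar alpham1 : R)
          (x : nat -> V) (alpha : nat -> R).

Definition Aop (z : V) : V := A1 z + A2 z.

(* alpha_{k-1}, with alpha_{-1} = alpham1 *)
Definition alpha_prev (k : nat) : R :=
  if k is k'.+1 then alpha k' else alpham1.

Definition xbar_j (k j : nat) : V :=
  let a := alpha_prev k * theta ^+ j in
  resolvent B a (x k - a *: Aop (x k)).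

Definition linesearch_ok (k j : nat) : Prop :=
  alpha_prev k * theta ^+ j *
    ip H (A2 (x k) - A2 (xbar_j k j)) (x k - xbar_j k j)
  <= delta * hnorm (x k - xbar_j k j) ^+ 2.

Definition xbar (k : nat) : V :=
  resolvent B (alpha k) (x k - alpha k *: Aop (x k)).

Definition r_k (k : nat) : R :=
  deltabar / alpha k * hnorm (x k - xbar k) ^+ 2.

Definition T_k (k : nat) : set V :=
  [set z | ip H ((alpha k)^-1 *: (x k - xbar k) - (A2 (x k) - A2 (xbar k)))
                (z - xbar k) <= r_k k].

Definition Gamma_k (k : nat) : set V :=
  [set z | ip H (x 0 - x k) (z - x k) <= 0].

Definition method2_iterates (j : nat -> nat) : Prop :=
  forall k : nat,
    [/\ linesearch_ok k (j k),
        (forall i, (i < j k)%N -> ~ linesearch_ok k i),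
        alpha k = alpha_prev k * theta ^+ j k &
        is_proj (T_k k `&` Gamma_k k) (x 0) (x k.+1)].

End Method2.
End Hilbert.

(* At the forward-backward point [xbar k], monotonicity of [B] and [A2] reduces
   [zer (A + B) <= T_k] to the cocoercive part [A1], which Young's inequality
   controls because [alpha_k <= alpha_(-1) <= 4 beta deltabar].  Both [T_k] and
   [Gamma_k] are halfspaces, so [x_(k+1) = P_(T_k & Gamma_k) x_0] makes an obtuse
   angle at [x_(k+1)] with every zero, which is [zer (A + B) <= Gamma_(k+1)].

   The resolvent is a choice ([xget]) among the solutions [p] of
   [z - p \in a B p], so the argument needs such a [p] to exist: this is Minty's
   theorem.  It is proved by minimising [r + (|x|^2 + |u|^2) / 2] over the
   triples with [F_N (x, u) <= r], [F_N] the Fitzpatrick function of the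
   operator: strong convexity and completeness give a minimiser [(p, q)], whose
   variational inequality forces [(-q, -p)] into the graph and [p = -q]. *)

From HB Require Import structures.
From mathcomp Require Import all_boot all_order all_algebra.
From mathcomp Require Import boolp classical_sets reals.
From mathcomp Require Import ring lra.
Import Order.TTheory GRing.Theory Num.Theory.
Local Open Scope ring_scope.
Local Open Scope classical_set_scope.
Set Implicit Arguments. Unset Strict Implicit. Unset Printing Implicit Defensive.

Lemma le0_of_le_scaled (R : realFieldType) (c d : R) :
  (forall t, 0 < t -> t <= 1 -> c <= t * d) -> c <= 0.
Proof.
move=> le_cd; rewrite leNgt; apply/negP => c_gt0.
pose t := c / (c + `|d|).
have cd_gt0 : 0 < c + `|d| by have := normr_ge0 d; lra.
have t_gt0 : 0 < t by rewrite divr_gt0.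
have t_le1 : t <= 1 by rewrite ler_pdivrMr // mul1r lerDl normr_ge0.
have td_le : t * d <= t * `|d| by rewrite ler_pM2l // ler_norm.
have t_absd : t * `|d| = c - t * c by rewrite /t; field; rewrite gt_eqF.
have := le_cd t t_gt0 t_le1; have : 0 < t * c by rewrite mulr_gt0.
lra.
Qed.

Section InnerProduct.
Variables (R : realType) (V : lmodType R) (H : inner_product V).
Local Notation ip := (ip H).
Local Notation hnorm := (hnorm H).

Lemma ip_addr x y z : ip z (x + y) = ip z x + ip z y.
Proof. by rewrite ip_sym ip_addl ![ip _ z]ip_sym. Qed.

Lemma ip_scaler a x y : ip y (a *: x) = a * ip y x.
Proof. by rewrite ip_sym ip_scalel ip_sym. Qed.

Lemma ip_oppl x y : ip (- x) y = - ip x y.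
Proof. by rewrite -scaleN1r ip_scalel mulN1r. Qed.

Lemma ip_oppr x y : ip y (- x) = - ip y x.
Proof. by rewrite -scaleN1r ip_scaler mulN1r. Qed.

Lemma ip0l y : ip 0 y = 0.
Proof. by rewrite -(scale0r 0) ip_scalel mul0r. Qed.

Definition ipE := (ip_addl, ip_addr, ip_oppl, ip_oppr, ip_scalel, ip_scaler).

Lemma hnorm_ge0 x : 0 <= hnorm x.
Proof. exact: sqrtr_ge0. Qed.

Lemma hnorm_sqr x : hnorm x ^+ 2 = ip x x.
Proof. by rewrite /hnorm sqr_sqrtr // ip_ge0. Qed.

Lemma hnorm_le x y : (hnorm x <= hnorm y) = (ip x x <= ip y y).
Proof. by rewrite -!hnorm_sqr ler_sqr ?nnegrE ?hnorm_ge0. Qed.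

Lemma hnorm_distC x y : hnorm (x - y) = hnorm (y - x).
Proof. by rewrite -opprB /hnorm ip_oppl ip_oppr opprK. Qed.

Lemma hnorm_eq0 x : hnorm x = 0 -> x = 0.
Proof. by move=> x0; apply: (@ip_eq0 _ _ H); rewrite -hnorm_sqr x0 expr0n. Qed.

Lemma ip_le_hnorm a b : ip a b <= hnorm a * hnorm b.
Proof.
have [/hnorm_eq0 ->|na_neq0] := eqVneq (hnorm a) 0.
  by rewrite ip0l mulr_ge0 // hnorm_ge0.
have [/hnorm_eq0 ->|nb_neq0] := eqVneq (hnorm b) 0.
  by rewrite ip_sym ip0l mulr_ge0 // hnorm_ge0.
set na := hnorm a; set nb := hnorm b.
have na_gt0 : 0 < na by rewrite lt_def na_neq0 hnorm_ge0.
have nb_gt0 : 0 < nb by rewrite lt_def nb_neq0 hnorm_ge0.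
have := ip_ge0 H (nb *: a - na *: b).
rewrite !ipE -(hnorm_sqr a) -(hnorm_sqr b) -/na -/nb (ip_sym H b a) => expand_ge0.
(* [0 <= |nb a - na b|^2 = 2 na nb (na nb - <a, b>)] *)
have : 0 <= na * nb * (2 * (na * nb - ip a b)) by nra.
by rewrite pmulr_rge0 ?mulr_gt0 //; lra.
Qed.

Lemma hnorm_sqr_le_sub a b :
  hnorm a ^+ 2 <= hnorm b ^+ 2 + 2 * hnorm (a - b) * hnorm a.
Proof.
have := ip_le_hnorm (a - b) a; have := ip_ge0 H (a - b).
rewrite !hnorm_sqr !ipE (ip_sym H b a); lra.
Qed.

Lemma young_ip (E D : V) (b : R) :
  0 < b -> ip E D <= b * ip E E + (4 * b)^-1 * ip D D.
Proof.
move=> b_gt0; have := ip_ge0 H ((2 * b) *: E - D).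
rewrite !ipE (ip_sym H D E) => sqr_ge0.
have -> : b * ip E E + (4 * b)^-1 * ip D D =
   ip E D + (4 * b ^+ 2 * ip E E - 4 * b * ip E D + ip D D) / (4 * b).
  by field; lra.
by rewrite lerDl divr_ge0 //; lra.
Qed.

End InnerProduct.

Section Convexity.
Variables (R : realType) (V : lmodType R) (H : inner_product V).
Local Notation ip := (ip H).

Definition convex_set (C : set V) : Prop :=
  forall p y t, C p -> C y -> 0 <= t -> t <= 1 -> C (p + t *: (y - p)).

Definition halfspace (U c : V) (r : R) : set V := [set z | ip U (z - c) <= r].

Lemma convex_halfspace U c r : convex_set (halfspace U c r).
Proof.
move=> p y t; rewrite /halfspace /= !ipE => le_p le_y t_ge0 t_le1.
have : 0 <= (1 - t) * (r - (ip U p - ip U c)) by apply: mulr_ge0; lra.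
have : 0 <= t * (r - (ip U y - ip U c)) by apply: mulr_ge0; lra.
lra.
Qed.

Lemma convex_setI C D : convex_set C -> convex_set D -> convex_set (C `&` D).
Proof.
by move=> convC convD p y t [Cp Dp] [Cy Dy] t0 t1; split; [exact: convC | exact: convD].
Qed.

Lemma is_proj_obtuse C x0 p y :
  convex_set C -> is_proj H C x0 p -> C y -> ip (x0 - p) (y - p) <= 0.
Proof.
move=> convC [Cp p_min] Cy.
apply: (@le0_of_le_scaled _ _ (ip (y - p) (y - p) / 2)) => t t_gt0 t_le1.
have := p_min _ (convC _ _ _ Cp Cy (ltW t_gt0) t_le1).
rewrite opprD addrA hnorm_le.
move: (x0 - p) (y - p) => u w; rewrite !ipE (ip_sym H w u) => le_uu.
(* [|u|^2 <= |u - t w|^2] expands to [2 t <u, w> <= t^2 |w|^2] *)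
have : 0 <= t * (t * (ip w w / 2) - ip u w) by lra.
by rewrite pmulr_rge0 //; lra.
Qed.

End Convexity.

Definition eventually (P : nat -> Prop) : Prop := exists N, forall n, (N <= n)%N -> P n.

Lemma eventually_and (P Q : nat -> Prop) :
  eventually P -> eventually Q -> eventually (fun n => P n /\ Q n).
Proof.
move=> [M PM] [N QN]; exists (maxn M N) => n; rewrite geq_max => /andP[Mn Nn].
by split; [exact: PM | exact: QN].
Qed.

Lemma eventually_ex (P : nat -> Prop) : eventually P -> exists n, P n.
Proof. by move=> [N PN]; exists N; exact: PN. Qed.

Lemma eventually_inv_succ_lt (R : realType) (e : R) :
  0 < e -> eventually (fun n => n.+1%:R^-1 < e).
Proof.
move=> e_gt0; exists (Num.Def.archi_bound e^-1) => n le_bn.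
rewrite -[e]invrK ltf_pV2 ?posrE ?invr_gt0 ?ltr0n //.
have einv_ge0 : 0 <= e^-1 by rewrite invr_ge0 ltW.
have := archi_boundP einv_ge0; rewrite -(ler_nat R) in le_bn.
have lt_n : n%:R < n.+1%:R :> R by rewrite ltr_nat.
lra.
Qed.

Section HilbertSequences.
Variables (R : realType) (V : lmodType R) (H : inner_product V).
Local Notation ip := (ip H).
Local Notation hnorm := (hnorm H).

Definition hconverges (u : nat -> V) (l : V) : Prop :=
  forall e, 0 < e -> eventually (fun n => hnorm (u n - l) < e).

Definition hcauchy (u : nat -> V) : Prop :=
  forall e, 0 < e -> exists N, forall m n, (N <= m)%N -> (N <= n)%N ->
    hnorm (u m - u n) < e.

Lemma hilbert_complete_cvg u :
  hilbert_complete H -> hcauchy u -> exists l, hconverges u l.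
Proof. by move=> complete; exact: complete. Qed.

Lemma hcauchy_of_sqr_bound (u : nat -> V) (eps : nat -> R) :
  (forall m n, ip (u m - u n) (u m - u n) <= eps m + eps n) ->
  (forall e, 0 < e -> eventually (fun n => eps n < e)) ->
  hcauchy u.
Proof.
move=> le_eps eps_small e e_gt0.
have [N epsN] := eps_small _ (divr_gt0 (exprn_gt0 2 e_gt0) (ltr0n R 2)).
exists N => m n Nm Nn.
rewrite -ltr_sqr ?nnegrE ?hnorm_ge0 ?ltW // hnorm_sqr.
by have := le_eps m n; have := epsN m Nm; have := epsN n Nn; lra.
Qed.

Lemma hconverges_ip_lower u l w e : hconverges u l -> 0 < e ->
  eventually (fun n => ip l l + 2 * ip l w < ip (u n) (u n) + 2 * ip (u n) w + e).
Proof.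
move=> ul e_gt0.
have := hnorm_ge0 H (l + w); set a := hnorm (l + w) => a_ge0.
have a1_gt0 : 0 < 2 * (a + 1) by lra.
have [N ulN] := ul _ (divr_gt0 e_gt0 a1_gt0); exists N => n Nn.
have := hnorm_sqr_le_sub H (l + w) (u n + w).
rewrite opprD addrACA subrr addr0 hnorm_distC -/a.
have : hnorm (u n - l) * (2 * (a + 1)) < e by rewrite -ltr_pdivlMr // ulN.
have : 0 <= hnorm (u n - l) by exact: hnorm_ge0.
rewrite !hnorm_sqr !ipE (ip_sym H w l) (ip_sym H w (u n)); nra.
Qed.

End HilbertSequences.

Section Minty.
Variables (R : realType) (V : lmodType R) (H : inner_product V).
Hypothesis complete : hilbert_complete H.
Variable N : V -> V -> Prop.
Hypothesis maxN : maximally_monotone H N.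
Local Notation ip := (ip H).

(* [fitz_le x u r] says that the Fitzpatrick function of [N] is at most [r]
   at [(x, u)]. *)
Definition fitz_le (x u : V) (r : R) : Prop :=
  forall y v, N y v -> ip x v + ip y u - ip y v <= r.

Definition fitz_energy (x u : V) (r : R) : R := r + (ip x x + ip u u) / 2.

Definition fitz_energies : set R :=
  [set e | exists x u r, fitz_le x u r /\ e = fitz_energy x u r].

Definition fitz_inf : R := inf fitz_energies.

Lemma fitz_le_ip x u r : fitz_le x u r -> ip x u <= r.
Proof.
move=> fxu; rewrite leNgt; apply/negP => lt_r.
have Nxu : N x u.
  apply: maxN.2 => y v Nyv; have := fxu y v Nyv.
  by rewrite !ipE (ip_sym H u x) (ip_sym H v x) (ip_sym H u y) (ip_sym H v y); lra.
by have := fxu x u Nxu; lra.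
Qed.

Lemma fitz_le_graph y v : N y v -> fitz_le y v (ip y v).
Proof.
move=> Nyv y' v' Nyv'; have := maxN.1 _ _ _ _ Nyv Nyv'.
by rewrite !ipE (ip_sym H v' y) (ip_sym H v y') (ip_sym H v y) (ip_sym H v' y'); lra.
Qed.

Lemma graph_nonempty : exists y v, N y v.
Proof.
case: (pselect (exists y v, N y v)) => // no_graph; exists 0, 0.
by apply: maxN.2 => y v Nyv; exfalso; apply: no_graph; exists y, v.
Qed.

Lemma fitz_energy_ge0 x u r : fitz_le x u r -> 0 <= fitz_energy x u r.
Proof.
move=> /fitz_le_ip le_r; have := ip_ge0 H (x + u).
by rewrite !ipE (ip_sym H u x) /fitz_energy; lra.
Qed.

Lemma has_inf_fitz_energies : has_inf fitz_energies.
Proof.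
split.
  have [y [v Nyv]] := graph_nonempty.
  by exists (fitz_energy y v (ip y v)), y, v, (ip y v); split => //; exact: fitz_le_graph.
by exists 0 => _ [x [u [r [fxu ->]]]]; exact: fitz_energy_ge0.
Qed.

Lemma fitz_inf_le x u r : fitz_le x u r -> fitz_inf <= fitz_energy x u r.
Proof. by move=> fxu; apply: (ge_inf has_inf_fitz_energies.2); exists x, u, r. Qed.

Lemma fitz_le_convex x1 u1 r1 x2 u2 r2 t :
  fitz_le x1 u1 r1 -> fitz_le x2 u2 r2 -> 0 <= t -> t <= 1 ->
  fitz_le ((1 - t) *: x1 + t *: x2) ((1 - t) *: u1 + t *: u2)
          ((1 - t) * r1 + t * r2).
Proof.
move=> f1 f2 t_ge0 t_le1 y v Nyv.
have := f1 y v Nyv; have := f2 y v Nyv; rewrite !ipE => le2 le1.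
have : 0 <= (1 - t) * (r1 - (ip x1 v + ip y u1 - ip y v)) by apply: mulr_ge0; lra.
have : 0 <= t * (r2 - (ip x2 v + ip y u2 - ip y v)) by apply: mulr_ge0; lra.
lra.
Qed.

(* Strong convexity: the parallelogram law at the midpoint. *)
Lemma fitz_energy_dist x1 u1 r1 x2 u2 r2 :
  fitz_le x1 u1 r1 -> fitz_le x2 u2 r2 ->
  ip (x1 - x2) (x1 - x2) + ip (u1 - u2) (u1 - u2) <=
  4 * (fitz_energy x1 u1 r1 + fitz_energy x2 u2 r2 - 2 * fitz_inf).
Proof.
move=> f1 f2.
have half_ge0 : 0 <= 2^-1 :> R by rewrite invr_ge0 ler0n.
have half_le1 : 2^-1 <= 1 :> R by rewrite invf_le1 ?ler1n ?ltr0n.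
have := fitz_inf_le (fitz_le_convex f1 f2 half_ge0 half_le1).
by rewrite /fitz_energy !ipE (ip_sym H x2 x1) (ip_sym H u2 u1); lra.
Qed.

Lemma fitz_le_limit (xs us : nat -> V) (rs : nat -> R) p q :
  (forall n, fitz_le (xs n) (us n) (rs n)) ->
  (forall n, fitz_energy (xs n) (us n) (rs n) < fitz_inf + n.+1%:R^-1) ->
  hconverges H xs p -> hconverges H us q ->
  fitz_le p q (fitz_inf - (ip p p + ip q q) / 2).
Proof.
move=> feas small xp uq y v Nyv; apply/ler_addgt0Pr => e e_gt0.
have e3_gt0 : 0 < e / 3 by rewrite divr_gt0.
have [n [[lim_x lim_u] lim_n]] := eventually_ex (eventually_and
  (eventually_and (hconverges_ip_lower v xp e3_gt0) (hconverges_ip_lower y uq e3_gt0))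
  (eventually_inv_succ_lt e3_gt0)).
have := feas n y v Nyv; have := small n; move: lim_n.
by rewrite /fitz_energy (ip_sym H y q) (ip_sym H y (us n)); set a := n.+1%:R^-1; lra.
Qed.

Lemma fitz_minimizer : exists p q r, fitz_le p q r /\ fitz_energy p q r = fitz_inf.
Proof.
have approx n : exists t : (V * V * R)%type,
    fitz_le t.1.1 t.1.2 t.2 /\ fitz_energy t.1.1 t.1.2 t.2 < fitz_inf + n.+1%:R^-1.
  have inv_gt0 : 0 < n.+1%:R^-1 :> R by rewrite invr_gt0 ltr0n.
  have [_ [x [u [r [fxu ->]]]] lt_inf] := inf_adherent inv_gt0 has_inf_fitz_energies.
  by exists (x, u, r).
have [s s_spec] := choice approx.
pose xs n := (s n).1.1; pose us n := (s n).1.2; pose rs n := (s n).2.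
have feas n : fitz_le (xs n) (us n) (rs n) := (s_spec n).1.
have small n : fitz_energy (xs n) (us n) (rs n) < fitz_inf + n.+1%:R^-1 := (s_spec n).2.
pose eps n : R := 4 * n.+1%:R^-1.
have eps_small e : 0 < e -> eventually (fun n => eps n < e).
  move=> e_gt0; have [M inv_small] := eventually_inv_succ_lt (divr_gt0 e_gt0 (ltr0n R 4)).
  by exists M => n /inv_small; rewrite /eps; set a := n.+1%:R^-1; lra.
have dist m n : ip (xs m - xs n) (xs m - xs n) + ip (us m - us n) (us m - us n)
    <= eps m + eps n.
  have := fitz_energy_dist (feas m) (feas n); have := small m; have := small n.
  by rewrite /eps; set a := m.+1%:R^-1; set b := n.+1%:R^-1; lra.
have [p xp] : exists p, hconverges H xs p.
  apply: (hilbert_complete_cvg complete); apply: (hcauchy_of_sqr_bound _ eps_small).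
  by move=> m n; have := dist m n; have := ip_ge0 H (us m - us n); lra.
have [q uq] : exists q, hconverges H us q.
  apply: (hilbert_complete_cvg complete); apply: (hcauchy_of_sqr_bound _ eps_small).
  by move=> m n; have := dist m n; have := ip_ge0 H (xs m - xs n); lra.
exists p, q, (fitz_inf - (ip p p + ip q q) / 2); split.
  exact: (fitz_le_limit feas small).
by rewrite /fitz_energy subrK.
Qed.

Lemma fitz_minimizer_variational p q r :
  fitz_le p q r -> fitz_energy p q r = fitz_inf ->
  forall y v, N y v -> 0 <= ip y v - r + ip p (y - p) + ip q (v - q).
Proof.
move=> fpq min_pq y v Nyv.
suff : - (ip y v - r + ip p (y - p) + ip q (v - q)) <= 0 by lra.
apply: (le0_of_le_scaled (d := (ip (y - p) (y - p) + ip (v - q) (v - q)) / 2)).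
move=> t t_gt0 t_le1.
have := fitz_inf_le (fitz_le_convex fpq (fitz_le_graph Nyv) (ltW t_gt0) t_le1).
rewrite -min_pq /fitz_energy => le_min.
have : 0 <= t * (ip y v - r + ip p (y - p) + ip q (v - q) +
                 t * ((ip (y - p) (y - p) + ip (v - q) (v - q)) / 2)).
  by move: le_min; rewrite !ipE (ip_sym H y p) (ip_sym H v q); lra.
by rewrite pmulr_rge0 //; lra.
Qed.

Theorem minty : exists x, N x (- x).
Proof.
have [p [q [r [fpq min_pq]]]] := fitz_minimizer.
have var := fitz_minimizer_variational fpq min_pq.
have le_r := fitz_le_ip fpq.
have Nqp : N (- q) (- p).
  apply: maxN.2 => y v Nyv; have := var y v Nyv; have := ip_ge0 H (p + q).
  by rewrite !ipE (ip_sym H q p) (ip_sym H v q) (ip_sym H v y); lra.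
have pq0 : ip (p + q) (p + q) = 0.
  apply/eqP; rewrite eq_le ip_ge0 andbT; have := var _ _ Nqp.
  by rewrite !ipE (ip_sym H q p); lra.
have p_eq : p = - q.
  by apply/eqP; rewrite -addr_eq0; apply/eqP; exact: (@ip_eq0 _ _ H).
by exists p; rewrite p_eq opprK; rewrite p_eq opprK in Nqp.
Qed.

End Minty.

Section ForwardBackward.
Variables (R : realType) (V : lmodType R) (H : inner_product V).
Local Notation ip := (ip H).

Lemma maximally_monotone_shift_scale (B : V -> V -> Prop) (a : R) (z : V) :
  0 < a -> maximally_monotone H B ->
  maximally_monotone H (fun y c => B y (a^-1 *: (z + c))).
Proof.
move=> a_gt0 [monoB maxB]; have a_neq0 : a != 0 by rewrite gt_eqF.
have ip_scale c c' w : ip (a^-1 *: (z + c) - a^-1 *: (z + c')) w = a^-1 * ip (c - c') w.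
  by rewrite !ipE; field.
split=> [y y' c c' Byc Byc' | y c max_yc].
  by have := monoB _ _ _ _ Byc Byc'; rewrite ip_scale pmulr_rge0 ?invr_gt0.
apply: maxB => y' v Byv.
have v_eq : a^-1 *: (z + (a *: v - z)) = v.
  by rewrite addrC subrK scalerA mulVf // scale1r.
have := max_yc y' (a *: v - z); rewrite v_eq => /(_ Byv) le_yv.
by rewrite -{1}v_eq ip_scale pmulr_rge0 ?invr_gt0.
Qed.

Lemma resolventP (B : V -> V -> Prop) (a : R) (z : V) :
  hilbert_complete H -> maximally_monotone H B -> 0 < a ->
  B (resolvent B a z) (a^-1 *: (z - resolvent B a z)).
Proof.
move=> complete maxB a_gt0.
have [p Bp] := minty complete (maximally_monotone_shift_scale z a_gt0 maxB).
by apply: (@xgetPex _ 0 [set p | B p (a^-1 *: (z - p))]); exists p.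
Qed.

Lemma cocoercive_ip_ge (beta : R) (T : V -> V) x y z :
  0 < beta -> cocoercive H beta T ->
  - ((4 * beta)^-1 * ip (x - y) (x - y)) <= ip (T x - T z) (y - z).
Proof.
move=> beta_gt0 coT.
have := coT x z; have := young_ip H (T x - T z) (x - y) beta_gt0.
have -> : x - z = (x - y) + (y - z) by rewrite addrA subrK.
by rewrite hnorm_sqr (ip_addr _ (x - y)); set c := (4 * beta)^-1; nra.
Qed.

(* Monotonicity of [B] and [A2] leaves only the [A1] term, which cocoercivity
   and Young's inequality bound by [deltabar / a * |x - xb|^2]. *)
Lemma fb_halfspace_zer (A1 A2 : V -> V) (B : V -> V -> Prop) (beta deltabar a : R)
    (x xb z : V) :
  0 < beta -> cocoercive H beta A1 -> monotone_op H (graph A2) -> monotone_op H B ->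
  0 < a -> a <= 4 * beta * deltabar ->
  B xb (a^-1 *: (x - a *: Aop A1 A2 x - xb)) -> zer A1 A2 B z ->
  ip (a^-1 *: (x - xb) - (A2 x - A2 xb)) (z - xb) <= deltabar / a * hnorm H (x - xb) ^+ 2.
Proof.
move=> beta_gt0 coA1 monoA2 monoB a_gt0 le_a Bxb zer_z.
have a_neq0 : a != 0 by rewrite gt_eqF.
have coef : (4 * beta)^-1 <= deltabar / a.
  by rewrite ler_pdivlMr // ler_pdivrMl ?mulr_gt0 // mulrA.
have := monoB _ _ _ _ Bxb zer_z.
rewrite addrAC scalerBr scalerA mulVf // scale1r /Aop.
have := monoA2 _ _ _ _ (erefl (A2 xb)) (erefl (A2 z)).
have := cocoercive_ip_ge x xb z beta_gt0 coA1.
have := ler_wpM2r (ip_ge0 H (x - xb)) coef.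
rewrite hnorm_sqr; move: (ip (x - xb) (x - xb)) (a^-1 *: (x - xb)) => D U.
set c := (4 * beta)^-1; set k := deltabar / a.
by rewrite !ipE; lra.
Qed.

End ForwardBackward.

Section Method2.
Variables (R : realType) (V : lmodType R) (H : inner_product V).
Variables (A1 A2 : V -> V) (B : V -> V -> Prop).
Variables (theta delta deltabar alpham1 : R).
Variables (x : nat -> V) (alpha : nat -> R) (j : nat -> nat).
Hypothesis iterates : method2_iterates H A1 A2 B theta delta deltabar alpham1 x alpha j.

Lemma method2_alpha_bounds :
  0 < theta < 1 -> 0 < alpham1 -> forall k, 0 < alpha k <= alpham1.
Proof.
move=> /andP[theta_gt0 theta_lt1] alpham1_gt0.
have step k : 0 < alpha_prev alpham1 alpha k <= alpham1 -> 0 < alpha k <= alpham1.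
  have [_ _ -> _] := iterates k; move=> /andP[prev_gt0 prev_le].
  have /andP[pow_gt0 pow_le1] : 0 < theta ^+ j k <= 1.
    by rewrite exprn_gt0 // exprn_ile1 // ltW.
  by rewrite mulr_gt0 //= (le_trans _ prev_le) // ger_pMr.
by elim=> [|k IHk]; apply: step; rewrite //= alpham1_gt0 lexx.
Qed.

Lemma method2_zer_sub_T_k (beta : R) :
  hilbert_complete H -> 0 < beta -> cocoercive H beta A1 ->
  monotone_op H (graph A2) -> maximally_monotone H B ->
  0 < theta < 1 -> 0 < alpham1 -> alpham1 <= 4 * beta * deltabar ->
  forall k, zer A1 A2 B `<=` T_k H A1 A2 B deltabar x alpha k.
Proof.
move=> complete beta_gt0 coA1 monoA2 maxB theta01 alpham1_gt0 le_alpham1 k z zer_z.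
have /andP[alpha_gt0 alpha_le] := method2_alpha_bounds theta01 alpham1_gt0 k.
apply: (fb_halfspace_zer beta_gt0 coA1 monoA2 maxB.1 alpha_gt0) => //.
  exact: le_trans le_alpham1.
exact: resolventP complete maxB alpha_gt0.
Qed.

Lemma method2_zer_sub_Gamma_k :
  (forall k, zer A1 A2 B `<=` T_k H A1 A2 B deltabar x alpha k) ->
  forall k, zer A1 A2 B `<=` Gamma_k H x k.
Proof.
move=> zer_T; elim=> [|k IHk] z zer_z; first by rewrite /Gamma_k /= subrr ip0l.
have [_ _ _ proj] := iterates k.
apply: (is_proj_obtuse _ proj); last by split; [exact: zer_T | exact: IHk].
by apply: convex_setI; exact: convex_halfspace.
Qed.

End Method2.

Theorem lemma4p11 (R : realType) (V : lmodType R) (H : inner_product V)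
  (A1 A2 : V -> V) (B : V -> V -> Prop) (beta theta delta deltabar alpham1 : R)
  (x : nat -> V) (alpha : nat -> R) (j : nat -> nat) :
  hilbert_complete H ->
  0 < beta -> cocoercive H beta A1 ->
  maximally_monotone H (graph A2) -> uniformly_continuous H A2 ->
  maximally_monotone H B ->
  zer A1 A2 B !=set0 ->
  0 < theta < 1 -> 0 < delta < 1 -> 0 < deltabar -> 0 < 1 - delta - deltabar ->
  0 < alpham1 -> alpham1 <= 4 * beta * deltabar ->
  method2_iterates H A1 A2 B theta delta deltabar alpham1 x alpha j ->
  forall k : nat,
    zer A1 A2 B `<=` T_k H A1 A2 B deltabar x alpha k `&` Gamma_k H x k.
Proof.
move=> complete beta_gt0 coA1 [monoA2 _] _ maxB _ theta01 _ _ _ alpham1_gt0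
  le_alpham1 iterates k.
have zer_T := method2_zer_sub_T_k iterates complete beta_gt0 coA1 monoA2 maxB
  theta01 alpham1_gt0 le_alpham1.
move=> z zer_z; split; first exact: zer_T.
exact: (method2_zer_sub_Gamma_k iterates zer_T k zer_z).
Qed.
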